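(* Let $K$ be a field of characteristic $0$, let $a,r\in K$ with $a\neq 0$ and $r\notin\{-1,1,1-a,-1-a\}$, and put \[ b=\frac{r^2-1}{a},\qquad c=a+b+2r. \] Assume that $ab$, $bc$, $ac$ are pairwise distinct, so that \[ E':\ y^2=(x+ab)(x+bc)(x+ac) \] is an elliptic curve over $K$, and let $P=[0,abc]\in E'(K)$. Then $5P=\mathcal{O}$ if and only if \begin{align*} &(-4 r^2 + 4 r^4)a^4 + (4 r - 20 r^3 + 16 r^5) a^3 + ( -1 + 16 r^2 - 40 r^4 + 24 r^6)a^2\\ &\quad + (-4 r + 24 r^3 - 36 r^5 + 16 r^7)a -4 r^2 + 12 r^4 - 12 r^6 + 4 r^8=0. \end{align*}
   Context: With these definitions $ab+1=r^2$, $ac+1=(a+r)^2$ and $bc+1$ is also a square, so $\{a,b,c\}$ is a Diophantine triple. $\mathcal{O}$ denotes the point at infinity (neutral element) of $E'$. *)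

From HB Require Import structures.
From mathcomp Require Import all_boot all_order all_algebra.
Set Implicit Arguments. Unset Strict Implicit. Unset Printing Implicit Defensive.
Import Order.TTheory GRing.Theory Num.Theory.
Local Open Scope ring_scope.

Inductive ecpoint (K : Type) := EInf | EPt of K & K.
Arguments EInf {K}.

Section ECLaw.
Variable K : fieldType.
Variables a2 a4 a6 : K.

Definition on_curve (P : ecpoint K) : bool :=
  match P with
  | EInf => true
  | EPt x y => y ^+ 2 == x ^+ 3 + a2 * x ^+ 2 + a4 * x + a6
  end.

(* Note: a6 does not enter the addition formulas; it only determines the curve. *)
Definition ec_add (P Q : ecpoint K) : ecpoint K :=
  match P, Q with
  | EInf, _ => Q
  | _, EInf => P
  | EPt x1 y1, EPt x2 y2 =>
      if (x1 == x2) && (y1 + y2 == 0) then EInf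
      else
        let l := if x1 == x2
                 then (3%:R * x1 ^+ 2 + 2%:R * a2 * x1 + a4) / (2%:R * y1)
                 else (y2 - y1) / (x2 - x1) in
        let x3 := l ^+ 2 - a2 - x1 - x2 in
        EPt x3 (l * (x1 - x3) - y1)
  end.

Definition ec_mul (n : nat) (P : ecpoint K) : ecpoint K := iter n (ec_add P) EInf.
End ECLaw.

(* The curve y^2 = (x+e1)(x+e2)(x+e3), expanded to Weierstrass coefficients. *)
Definition cub_a2 (K : fieldType) (e1 e2 e3 : K) : K := e1 + e2 + e3.
Definition cub_a4 (K : fieldType) (e1 e2 e3 : K) : K := e1 * e2 + e1 * e3 + e2 * e3.
Definition cub_a6 (K : fieldType) (e1 e2 e3 : K) : K := e1 * e2 * e3.

Definition cub_mul (K : fieldType) (e1 e2 e3 : K) (n : nat) (P : ecpoint K) :=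
  ec_mul (cub_a2 e1 e2 e3) (cub_a4 e1 e2 e3) n P.

(* Write y0 = abc, so P = (0, y0). The tangent at P gives 2P = (1, Y2) with
   Y2 = -(a + b + r) - y0, and the chord through P and 2P gives 3P = (X3, Y3)
   with X3 = -4 y0 Y2. Now 5P = O iff 4P = -P, i.e. iff the chord through P
   and 3P meets the curve a third time on the line x = 0. That third
   x-coordinate equals 4 y0^2 (4 y0 Y2 + 1) / X3^2, and -a^2 (4 y0 Y2 + 1) is
   exactly the polynomial of the statement. In the degenerate case X3 = 0 the
   point 2P has order 2, so 5P = P. *)
From HB Require Import structures.
From mathcomp Require Import all_boot all_order all_algebra.
From mathcomp Require Import ring.
Import Order.TTheory GRing.Theory Num.Theory.
Set Implicit Arguments. Unset Strict Implicit. Unset Printing Implicit Defensive.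
Local Open Scope ring_scope.

Lemma mulf_eq0_iff (R : idomainType) (k x : R) : k != 0 -> k * x = 0 <-> x = 0.
Proof. by move=> nk; split=> [/eqP|->]; rewrite ?mulr0 // mulf_eq0 (negbTE nk) => /eqP. Qed.

Section ChordTangent.
Variables (K : fieldType) (A2 A4 : K).

Definition line_x (l x1 x2 : K) : K := l ^+ 2 - A2 - x1 - x2.

Definition line_sum (l x1 y1 x2 : K) : ecpoint K :=
  EPt (line_x l x1 x2) (l * (x1 - line_x l x1 x2) - y1).

Definition tangent_slope (x y : K) : K :=
  (3%:R * x ^+ 2 + 2%:R * A2 * x + A4) / (2%:R * y).

Definition chord_slope (x1 y1 x2 y2 : K) : K := (y2 - y1) / (x2 - x1).

Lemma ec_add_tangent x y : y + y != 0 ->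
  ec_add A2 A4 (EPt x y) (EPt x y) = line_sum (tangent_slope x y) x y x.
Proof. by move=> ny; rewrite /ec_add eqxx (negbTE ny). Qed.

Lemma ec_add_chord x1 y1 x2 y2 : x1 != x2 ->
  ec_add A2 A4 (EPt x1 y1) (EPt x2 y2) =
  line_sum (chord_slope x1 y1 x2 y2) x1 y1 x2.
Proof. by move=> nx; rewrite /ec_add (negbTE nx). Qed.

Lemma ec_addp0 P : ec_add A2 A4 P EInf = P.
Proof. by case: P. Qed.

Lemma ec_add_opp x y : ec_add A2 A4 (EPt x y) (EPt x (- y)) = EInf.
Proof. by rewrite /ec_add eqxx subrr eqxx. Qed.

Lemma ec_add_chord_eq_inf x1 y1 x2 y2 : x1 != x2 ->
  ec_add A2 A4 (EPt x1 y1) (ec_add A2 A4 (EPt x1 y1) (EPt x2 y2)) = EInf <->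
  line_x (chord_slope x1 y1 x2 y2) x1 x2 = x1.
Proof.
move=> nx; rewrite ec_add_chord // /line_sum.
split; last by move=> ->; rewrite subrr mulr0 sub0r ec_add_opp.
by rewrite /ec_add; case: ifP => // /andP[/eqP <-].
Qed.
End ChordTangent.

Definition five_torsion_poly (K : fieldType) (a r : K) : K :=
  (- 4%:R * r ^+ 2 + 4%:R * r ^+ 4) * a ^+ 4
  + (4%:R * r - 20%:R * r ^+ 3 + 16%:R * r ^+ 5) * a ^+ 3
  + (- 1 + 16%:R * r ^+ 2 - 40%:R * r ^+ 4 + 24%:R * r ^+ 6) * a ^+ 2
  + (- 4%:R * r + 24%:R * r ^+ 3 - 36%:R * r ^+ 5 + 16%:R * r ^+ 7) * a
  - 4%:R * r ^+ 2 + 12%:R * r ^+ 4 - 12%:R * r ^+ 6 + 4%:R * r ^+ 8.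

Section DiophantineTriple.
Variables (K : fieldType) (a r b c : K).
Hypothesis charK : [pchar K] =i pred0.
Hypotheses (ha : a != 0) (hr1 : r != 1) (hrm1 : r != -1) (hr2 : r != 1 - a)
  (hr3 : r != -1 - a).
Hypotheses (hb : b = (r ^+ 2 - 1) / a) (hc : c = a + b + 2%:R * r).

Let A2 := cub_a2 (a * b) (b * c) (a * c).
Let A4 := cub_a4 (a * b) (b * c) (a * c).
Let y0 := a * b * c.
Let Y2 := - (a + b + r) - y0.
Let X3 := - 4%:R * y0 * Y2.
Let Y3 := - (Y2 - y0) * X3 - y0.

Let two_neq0 : (2%:R : K) != 0. Proof. by move/pcharf0P: charK => ->. Qed.
Let four_neq0 : (4%:R : K) != 0. Proof. by move/pcharf0P: charK => ->. Qed.

Lemma c_eq : c = ((a + r) ^+ 2 - 1) / a.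
Proof. by rewrite hc hb; field. Qed.

Lemma rsqr_sub1_neq0 : r ^+ 2 - 1 != 0.
Proof.
have -> : r ^+ 2 - 1 = (r - 1) * (r + 1) by ring.
by rewrite mulf_neq0 // ?subr_eq0 // addr_eq0.
Qed.

Lemma arsqr_sub1_neq0 : (a + r) ^+ 2 - 1 != 0.
Proof.
have -> : (a + r) ^+ 2 - 1 = (r - (1 - a)) * (r - (-1 - a)) by ring.
by rewrite mulf_neq0 // subr_eq0.
Qed.

Let nonzero := (ha, two_neq0, four_neq0, rsqr_sub1_neq0, arsqr_sub1_neq0).

Lemma y0_eq : y0 = (r ^+ 2 - 1) * ((a + r) ^+ 2 - 1) / a.
Proof. by rewrite /y0 c_eq hb; field. Qed.

Lemma y0_neq0 : y0 != 0.
Proof. by rewrite y0_eq !mulf_neq0 ?invr_neq0 ?nonzero. Qed.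

Lemma double_P : ec_add A2 A4 (EPt 0 y0) (EPt 0 y0) = EPt 1 Y2.
Proof.
rewrite ec_add_tangent; last by rewrite -mulr2n -mulr_natr mulf_neq0 ?y0_neq0.
rewrite /line_sum /line_x /tangent_slope /A2 /A4 /cub_a2 /cub_a4 /Y2 /y0 c_eq hb.
by congr EPt; field; rewrite ?nonzero.
Qed.

Lemma triple_P : ec_add A2 A4 (EPt 0 y0) (EPt 1 Y2) = EPt X3 Y3.
Proof.
rewrite ec_add_chord; last by rewrite eq_sym oner_neq0.
rewrite /line_sum /chord_slope subr0 divr1.
have -> : line_x A2 (Y2 - y0) 0 1 = X3.
  by rewrite /line_x /A2 /cub_a2 /X3 /Y2 /y0 c_eq hb; field; rewrite ?nonzero.
by rewrite /Y3 sub0r mulrN mulNr.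
Qed.

Lemma five_torsion_polyE : five_torsion_poly a r = - a ^+ 2 * (4%:R * y0 * Y2 + 1).
Proof. by rewrite /five_torsion_poly /Y2 y0_eq hb; field. Qed.

Lemma X3_eq0 : (X3 == 0) = (Y2 == 0).
Proof.
by rewrite /X3 -mulrA mulf_eq0 oppr_eq0 (negbTE four_neq0) mulf_eq0 (negbTE y0_neq0).
Qed.

Lemma quadruple_P_x : X3 != 0 ->
  line_x A2 (chord_slope 0 y0 X3 Y3) 0 X3 =
  4%:R * y0 ^+ 2 / X3 ^+ 2 * (4%:R * y0 * Y2 + 1).
Proof.
move=> nX3; apply: (mulIf (expf_neq0 2 nX3)); rewrite mulrAC divfK ?expf_neq0 //.
have -> : line_x A2 (chord_slope 0 y0 X3 Y3) 0 X3 * X3 ^+ 2 =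
    (Y3 - y0) ^+ 2 - (A2 + X3) * X3 ^+ 2.
  by rewrite /line_x /chord_slope subr0 expr_div_n; field.
by rewrite /Y3 /X3 /Y2 /A2 /cub_a2 y0_eq c_eq hb; field; rewrite ?nonzero.
Qed.

Lemma mul5_P_eq_inf :
  ec_mul A2 A4 5 (EPt 0 y0) = EInf <-> five_torsion_poly a r = 0.
Proof.
rewrite /ec_mul !iterS [iter 0 _ _]/= ec_addp0 double_P triple_P.
rewrite five_torsion_polyE.
have [X3_0 | nX3] := eqVneq X3 0.
  have Y2_0 : Y2 = 0 by apply/eqP; rewrite -X3_eq0 X3_0.
  have -> : Y3 = - y0 by rewrite /Y3 X3_0 mulr0 sub0r.
  rewrite X3_0 ec_add_opp ec_addp0 Y2_0 mulr0 add0r mulr1; split => // /eqP.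
  by rewrite oppr_eq0 expf_eq0 (negbTE ha) andbF.
rewrite ec_add_chord_eq_inf 1?eq_sym // quadruple_P_x //.
apply: (iff_trans (mulf_eq0_iff _ _)).
  by rewrite mulf_neq0 ?invr_neq0 ?expf_neq0 // mulf_neq0 ?expf_neq0 ?y0_neq0.
by apply: iff_sym; apply: mulf_eq0_iff; rewrite oppr_eq0 expf_neq0.
Qed.
End DiophantineTriple.

Theorem lemma1 (K : fieldType) (charK : [pchar K] =i pred0) (a r b c : K)
  (ha : a != 0) (hr1 : r != 1) (hrm1 : r != -1) (hr2 : r != 1 - a)
  (hr3 : r != -1 - a)
  (hb : b = (r ^+ 2 - 1) / a) (hc : c = a + b + 2%:R * r)
  (d1 : a * b != b * c) (d2 : a * b != a * c) (d3 : b * c != a * c) :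
  cub_mul (a * b) (b * c) (a * c) 5 (EPt 0 (a * b * c)) = EInf <->
  (- 4%:R * r ^+ 2 + 4%:R * r ^+ 4) * a ^+ 4
  + (4%:R * r - 20%:R * r ^+ 3 + 16%:R * r ^+ 5) * a ^+ 3
  + (- 1 + 16%:R * r ^+ 2 - 40%:R * r ^+ 4 + 24%:R * r ^+ 6) * a ^+ 2
  + (- 4%:R * r + 24%:R * r ^+ 3 - 36%:R * r ^+ 5 + 16%:R * r ^+ 7) * a
  - 4%:R * r ^+ 2 + 12%:R * r ^+ 4 - 12%:R * r ^+ 6 + 4%:R * r ^+ 8 = 0.
(* The distinctness hypotheses d1-d3 only make E' non-singular; the addition
   formulas do not need them. *)
Proof. exact: mul5_P_eq_inf. Qed.
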